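(* Let $a,b,c,d$ be four points on the unit circle, lying in this order along the circle, such that $L[a,b]$ and $L[c,d]$ are not parallel. Let $h$ be a point of the open segment $(b,c)$, and set $g=\mathrm{LIS}[a,b,c,d]$, $j=\mathrm{LIS}[g,h,a,c]$, $k=\mathrm{LIS}[g,h,b,d]$, $l=\mathrm{LIS}[g,h,a,d]$. Then $v_{\mathbb{B}^2}(h,j)=v_{\mathbb{B}^2}(k,l)$ and $v_{\mathbb{B}^2}(h,k)=v_{\mathbb{B}^2}(j,l)$.
   Context: $\mathbb{B}^2$ is the open unit disk in $\mathbb{C}$. For points $p,q,r,s$ with $p\ne q$, $r\ne s$, $\mathrm{LIS}[p,q,r,s]$ denotes the unique intersection point of the line $L[p,q]$ through $p,q$ and the line $L[r,s]$ through $r,s$. The visual angle metric is $v_{\mathbb{B}^2}(x,y)=\sup\{\measuredangle(x,z,y): z\in\partial\mathbb{B}^2\}$, where $\measuredangle(x,z,y)$ is the angle at $z$ between the segments $[z,x]$ and $[z,y]$. *)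

From Stdlib Require Import Reals.
From Coquelicot Require Import Coquelicot.
Open Scope R_scope.

Definition pt := (R * R)%type.

Definition padd (p q : pt) : pt := (fst p + fst q, snd p + snd q).
Definition psub (p q : pt) : pt := (fst p - fst q, snd p - snd q).
Definition pscale (t : R) (p : pt) : pt := (t * fst p, t * snd p).
Definition dot (p q : pt) : R := fst p * fst q + snd p * snd q.
Definition cross (p q : pt) : R := fst p * snd q - snd p * fst q.
Definition pnorm (p : pt) : R := sqrt (dot p p).

Definition on_unit_circle (z : pt) : Prop := pnorm z = 1.

Definition cis (t : R) : pt := (cos t, sin t).

Definition parallel (p q r s : pt) : Prop := cross (psub q p) (psub s r) = 0.

(* LIS[p,q,r,s]: intersection point of L[p,q] and L[r,s] (for non-parallel
   lines), written via Cramer's rule: p + t (q - p) with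
   t = cross(r - p, s - r) / cross(q - p, s - r). *)
Definition LIS (p q r s : pt) : pt :=
  padd p (pscale (cross (psub r p) (psub s r) / cross (psub q p) (psub s r))
                 (psub q p)).

Definition angle (x z y : pt) : R :=
  acos (dot (psub x z) (psub y z) / (pnorm (psub x z) * pnorm (psub y z))).

Definition vB2 (x y : pt) : R :=
  real (Lub_Rbar (fun t => exists z, on_unit_circle z /\ t = angle x z y)).

(* Put g = ab ∩ cd and parametrise the line gh as g + t (h - g).
   For concyclic a, b, c, d the unit circle lies in the pencil of conics spanned
   by the line pairs ab·cd and ad·bc (and also by ab·cd and ac·bd).  Since the first
   pair is singular at g, restricting the pencil to the line shows that the points
   cut out by ad, bc (resp. ac, bd) are exchanged by the involution of the line
   with fixed point g determined by the circle.  That involution is the inversion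
   in a circle centred at a point q of the line and orthogonal to the unit circle;
   it maps h to l and j to k.  The ordering of a, b, c, d puts h, j, k on one ray
   from q, and an inversion orthogonal to the unit circle preserves the unit circle
   and the angle subtended at any of its points by two points on a common ray from
   the centre.  Hence v(h,j) = v(l,k) and v(h,k) = v(l,j). *)

From Stdlib Require Import Reals Lra Nsatz.
From Coquelicot Require Import Coquelicot.
Open Scope R_scope.

Definition orient (p q x : pt) : R := cross (psub q p) (psub x p).

Definition cmul (u v : pt) : pt :=
  (fst u * fst v - snd u * snd v, fst u * snd v + snd u * fst v).

(* [r] is the square of the radius. *)
Definition invert (q : pt) (r : R) (z : pt) : pt :=
  padd q (pscale (r / dot (psub z q) (psub z q)) (psub z q)).

Ltac coords :=
  repeat match goal with p : pt |- _ => destruct p end;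
  unfold orient, cmul, cross, dot, psub, padd, pscale in *; simpl in *.

Lemma dot_self_nonneg v : 0 <= dot v v.
Proof. coords. nra. Qed.

Lemma dot_self_eq0 v : dot v v = 0 -> v = (0, 0).
Proof. coords. intro H. f_equal; nra. Qed.

Lemma dot_self_pos v : v <> (0, 0) -> 0 < dot v v.
Proof.
  intro Hv. destruct (Rle_lt_or_eq_dec _ _ (dot_self_nonneg v)) as [P | E]; [exact P |].
  exfalso. apply Hv, dot_self_eq0. auto.
Qed.

Lemma cross_nonzero_dot_pos v w : cross v w <> 0 -> 0 < dot v v.
Proof. intro H. apply dot_self_pos. intro E. apply H. rewrite E. coords. ring. Qed.

Lemma dot_self_pos_of_neq p q : p <> q -> 0 < dot (psub q p) (psub q p).
Proof.
  intro Hpq. apply dot_self_pos. intro E. apply Hpq. coords.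
  injection E; intros; f_equal; lra.
Qed.

Lemma dot_self_sub_pos x q : dot x x <> dot q q -> 0 < dot (psub x q) (psub x q).
Proof. intro H. apply dot_self_pos_of_neq. intro E. apply H. rewrite E. reflexivity. Qed.

Lemma dot_cauchy_schwarz u v : dot u v * dot u v <= dot u u * dot v v.
Proof. coords. pose proof (pow2_ge_0 (r * r2 - r0 * r1)). nra. Qed.

Lemma psub_padd_l p v : psub (padd p v) p = v.
Proof. coords. f_equal; ring. Qed.

Lemma padd_psub p z : padd p (psub z p) = z.
Proof. coords. f_equal; ring. Qed.

Lemma dot_pscale_self s v : dot (pscale s v) (pscale s v) = s * s * dot v v.
Proof. coords. ring. Qed.

Lemma pscale_pscale s t v : pscale s (pscale t v) = pscale (s * t) v.
Proof. coords. f_equal; ring. Qed.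

Lemma pscale_1 v : pscale 1 v = v.
Proof. coords. f_equal; ring. Qed.

Lemma dot_sub_scaled α β γ X Z :
  dot (psub (pscale α X) (pscale γ Z)) (psub (pscale β X) (pscale γ Z))
  = α * β * dot X X - (α + β) * γ * dot X Z + γ * γ * dot Z Z.
Proof. coords. ring. Qed.

Lemma dot_cmul_self u v : dot (cmul u v) (cmul u v) = dot u u * dot v v.
Proof. coords. ring. Qed.

Lemma parallel_scale u v : cross u v = 0 -> dot u u <> 0 ->
  v = pscale (dot v u / dot u u) u.
Proof.
  destruct u as [u1 u2], v as [v1 v2]. unfold cross, dot, pscale; simpl. intros H Hu.
  assert (E1 : u2 * (u1 * v2 - u2 * v1) = 0) by (rewrite H; ring).
  assert (E2 : u1 * (u1 * v2 - u2 * v1) = 0) by (rewrite H; ring).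
  f_equal; field_simplify_eq; auto; lra.
Qed.

Lemma pos_prod_same_sign x y z : 0 < x * y -> 0 < x * z -> 0 < y * z.
Proof. intros H1 H2. assert (0 < (x * y) * (x * z)) by (apply Rmult_lt_0_compat; auto). nra. Qed.

Lemma orient_at_left p q : orient p q p = 0.
Proof. coords. ring. Qed.

Lemma orient_at_right p q : orient p q q = 0.
Proof. coords. ring. Qed.

Lemma orient_cyclic p q r : orient p q r = orient q r p.
Proof. coords. ring. Qed.

Lemma orient_swap p q r : orient q p r = - orient p q r.
Proof. coords. ring. Qed.

Lemma orient_swap_last p q r : orient p r q = - orient p q r.
Proof. coords. ring. Qed.

Lemma orient_reverse p q r : orient r q p = - orient p q r.
Proof. coords. ring. Qed.

Lemma orient_affine_comb u v p q t :
  orient u v (padd p (pscale t (psub q p))) = (1 - t) * orient u v p + t * orient u v q.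
Proof. coords. ring. Qed.

Lemma orient_along p q g e t :
  orient p q (padd g (pscale t e)) = orient p q g + t * cross (psub q p) e.
Proof. coords. ring. Qed.

Lemma cross_eq_orient p q r : cross (psub q p) (psub r q) = orient p q r.
Proof. coords. ring. Qed.

Lemma orient_sub_cross a b c d :
  orient a c d - cross (psub b a) (psub d c) = orient b c d.
Proof. coords. ring. Qed.

Lemma on_line_param p q x : orient p q x = 0 -> p <> q ->
  exists τ, x = padd p (pscale τ (psub q p)).
Proof.
  intros Hx Hpq.
  pose proof (parallel_scale _ _ Hx (Rgt_not_eq _ _ (dot_self_pos_of_neq p q Hpq))) as E.
  eexists. rewrite <- E. coords. f_equal; ring.
Qed.

Lemma LIS_along p q r s :
  LIS p q r s = padd p (pscale (- orient r s p / cross (psub s r) (psub q p)) (psub q p)).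
Proof.
  unfold LIS. do 2 f_equal.
  replace (cross (psub r p) (psub s r)) with (orient r s p) by (coords; ring).
  replace (cross (psub q p) (psub s r)) with (- cross (psub s r) (psub q p)) by (coords; ring).
  unfold Rdiv. rewrite Rinv_opp. ring.
Qed.

Lemma power_along g e t :
  dot (padd g (pscale t e)) (padd g (pscale t e)) - 1
  = (dot g g - 1) + t * (2 * dot g e) + t * t * dot e e.
Proof. coords. ring. Qed.

Lemma chord_power a b t :
  dot a a = 1 -> dot b b = 1 ->
  dot (padd a (pscale t (psub b a))) (padd a (pscale t (psub b a))) - 1
  = t * (t - 1) * dot (psub b a) (psub b a).
Proof.
  intros Ha Hb.
  transitivity ((1 - t) * (dot a a - 1) + t * (dot b b - 1)
                + t * (t - 1) * dot (psub b a) (psub b a)); [coords; ring |].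
  rewrite Ha, Hb. ring.
Qed.

Lemma dot_cis t : dot (cis t) (cis t) = 1.
Proof. unfold dot, cis; simpl. rewrite <- (sin2_cos2 t). unfold Rsqr. ring. Qed.

Lemma orient_cis x y z :
  x < y -> y < z -> z < x + 2 * PI -> 0 < orient (cis x) (cis y) (cis z).
Proof.
  intros Hxy Hyz Hzx.
  set (A := (y - x) / 2). set (B := (z - y) / 2).
  assert (E : orient (cis x) (cis y) (cis z) = 4 * sin A * sin B * sin (A + B)).
  { replace x with (y - 2 * A) by (unfold A; field).
    replace z with (y + 2 * B) by (unfold B; field).
    unfold orient, cis, cross, psub; simpl.
    rewrite sin_plus, cos_plus, sin_minus, cos_minus, !sin_2a, !cos_2a, sin_plus.
    pose proof (sin2_cos2 A) as HA. pose proof (sin2_cos2 B) as HB.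
    pose proof (sin2_cos2 y) as HY. unfold Rsqr in *. nsatz. }
  rewrite E.
  assert (0 < sin A) by (apply sin_gt_0; unfold A; lra).
  assert (0 < sin B) by (apply sin_gt_0; unfold B; lra).
  assert (0 < sin (A + B)) by (apply sin_gt_0; unfold A, B; lra).
  assert (0 < sin A * sin B) by (apply Rmult_lt_0_compat; lra).
  nra.
Qed.

(** * The unit circle in a pencil of line pairs *)

(* For concyclic a, b, c, d the complex number (d-a)(c-b)/((b-a)(d-c)) is real. *)
Lemma concyclic_cross_ratio_real a b c d :
  dot a a = 1 -> dot b b = 1 -> dot c c = 1 -> dot d d = 1 ->
  cross (cmul (psub d a) (psub c b)) (cmul (psub b a) (psub d c)) = 0.
Proof. intros. coords. nsatz. Qed.

Lemma cross_zero_combination u v :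
  cross u v = 0 -> padd (pscale (dot v v) u) (pscale (- dot u v) v) = (0, 0).
Proof. intro H. coords. f_equal; nsatz. Qed.

Lemma affine_zero_on_triangle w k a b c :
  orient a b c <> 0 ->
  cross w a + k = 0 -> cross w b + k = 0 -> cross w c + k = 0 ->
  forall x, cross w x + k = 0.
Proof.
  intros Habc Ha Hb Hc x.
  assert (W1 : fst w * orient a b c = 0) by (coords; nsatz).
  assert (W2 : snd w * orient a b c = 0) by (coords; nsatz).
  apply Rmult_integral in W1, W2.
  destruct W1 as [W1 | ]; [| contradiction]. destruct W2 as [W2 | ]; [| contradiction].
  destruct w as [w1 w2]; simpl in W1, W2; subst.
  coords. lra.
Qed.

(* The quadratic parts cancel by [concyclic_cross_ratio_real], leaving an affine
   function that vanishes at a, b, c. *)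
Lemma unit_circle_pencil a b c d :
  dot a a = 1 -> dot b b = 1 -> dot c c = 1 -> dot d d = 1 ->
  orient a b c <> 0 -> c <> d ->
  exists m n l, m <> 0 /\ forall x,
    m * (orient a d x * orient b c x) + n * (orient a b x * orient c d x) = l * (dot x x - 1).
Proof.
  intros Ha Hb Hc Hd Habc Hcd.
  set (w1 := cmul (psub d a) (psub c b)). set (w2 := cmul (psub b a) (psub d c)).
  set (m := dot w2 w2). set (n := - dot w1 w2).
  set (l := (m * dot (psub d a) (psub c b) + n * dot (psub b a) (psub d c)) / 2).
  set (w := padd (pscale m (padd (pscale (cross b c) (psub d a)) (pscale (cross a d) (psub c b))))
                 (pscale n (padd (pscale (cross c d) (psub b a)) (pscale (cross a b) (psub d c))))).
  set (k := m * (cross a d * cross b c) + n * (cross a b * cross c d) + l).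
  set (F x := m * (orient a d x * orient b c x) + n * (orient a b x * orient c d x)
              - l * (dot x x - 1)).
  assert (Hquad : forall x,
    F x = cross w x + k - / 2 * dot (padd (pscale m w1) (pscale n w2)) (cmul x x)).
  { intro x. unfold F, k, w, l, m, n, w1, w2. coords. field. }
  assert (Hw : padd (pscale m w1) (pscale n w2) = (0, 0)).
  { apply cross_zero_combination, concyclic_cross_ratio_real; assumption. }
  assert (Haff : forall x, F x = cross w x + k).
  { intro x. rewrite Hquad, Hw. destruct (cmul x x). unfold dot; simpl. ring. }
  exists m, n, l. split.
  - unfold m, w2. rewrite dot_cmul_self.
    apply Rgt_not_eq, Rmult_lt_0_compat.
    + apply (cross_nonzero_dot_pos _ (psub c a)). exact Habc.
    + apply dot_self_pos_of_neq. exact Hcd.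
  - intro x. apply Rminus_diag_uniq. fold (F x). rewrite Haff.
    apply (affine_zero_on_triangle w k a b c Habc); rewrite <- Haff; unfold F;
      rewrite ?orient_at_left, ?orient_at_right, ?Ha, ?Hb, ?Hc; ring.
Qed.

(** * The involution induced on a line *)

(* On a line g + t e through the double point g of the second line pair, the first
   pair cuts out the quadratic (α1 + t δ1) (α2 + t δ2); the pencil relation makes its
   constant and linear coefficients proportional to those of |g + t e|^2 - 1. *)
Lemma pencil_line_coefficients p1 p2 p3 p4 r1 r2 r3 r4 g e m n l :
  m <> 0 ->
  (forall x, m * (orient p1 p2 x * orient p3 p4 x) + n * (orient r1 r2 x * orient r3 r4 x)
             = l * (dot x x - 1)) ->
  orient r1 r2 g = 0 -> orient r3 r4 g = 0 ->
  (dot g g - 1) * (orient p1 p2 g * cross (psub p4 p3) e + orient p3 p4 g * cross (psub p2 p1) e)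
  = 2 * dot g e * (orient p1 p2 g * orient p3 p4 g).
Proof.
  intros Hm Hpencil Hr12 Hr34.
  pose proof (Hpencil g) as E0.
  pose proof (Hpencil (padd g (pscale 1 e))) as E1.
  pose proof (Hpencil (padd g (pscale (-1) e))) as E2.
  rewrite !orient_along, Hr12, Hr34 in E1, E2. rewrite Hr12, Hr34 in E0.
  rewrite power_along in E1, E2.
  apply (Rmult_eq_reg_l m); [| exact Hm].
  set (α1 := orient p1 p2 g) in *. set (α2 := orient p3 p4 g) in *.
  set (δ1 := cross (psub p2 p1) e) in *. set (δ2 := cross (psub p4 p3) e) in *.
  assert (Hlin : m * (α1 * δ2 + α2 * δ1) = l * (2 * dot g e)) by nra.
  transitivity ((dot g g - 1) * (m * (α1 * δ2 + α2 * δ1))); [ring |].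
  rewrite Hlin. transitivity (2 * dot g e * (l * (dot g g - 1))); [ring |].
  rewrite <- E0. ring.
Qed.

Lemma involution_of_coefficients γ β α1 δ1 α2 δ2 t1 t2 :
  γ * (α1 * δ2 + α2 * δ1) = β * (α1 * α2) -> δ1 <> 0 -> δ2 <> 0 ->
  α1 + t1 * δ1 = 0 -> α2 + t2 * δ2 = 0 ->
  β * t1 * t2 + γ * (t1 + t2) = 0.
Proof.
  intros H Hd1 Hd2 H1 H2.
  replace α1 with (- t1 * δ1) in H by lra. replace α2 with (- t2 * δ2) in H by lra.
  apply (Rmult_eq_reg_l (δ1 * δ2)); [| now apply Rmult_integral_contrapositive].
  nra.
Qed.

Lemma involution_center γ β t1 t2 :
  β <> 0 -> β * t1 * t2 + γ * (t1 + t2) = 0 ->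
  (t1 - - γ / β) * (t2 - - γ / β) = (γ / β) * (γ / β).
Proof.
  intros Hb H.
  transitivity ((β * t1 * t2 + γ * (t1 + t2)) / β + (γ / β) * (γ / β)); [field; exact Hb |].
  rewrite H. field. exact Hb.
Qed.

Lemma root_between α δ t1 t2 :
  (α + t1 * δ) * (α + t2 * δ) < 0 ->
  δ <> 0 /\ (t1 - - α / δ) * (t2 - - α / δ) < 0.
Proof.
  intro H. assert (Hδ : δ <> 0) by (intro E; subst; nra). split; [exact Hδ |].
  replace ((t1 - - α / δ) * (t2 - - α / δ)) with ((α + t1 * δ) * (α + t2 * δ) / (δ * δ))
    by (field; exact Hδ).
  apply Rdiv_neg_pos; [exact H |]. nra.
Qed.

Lemma same_side_of_between x y r q :
  (x - r) * (y - r) < 0 -> 0 < (x - q) * (y - q) -> 0 < (x - q) * (r - q).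
Proof.
  intros H1 H2. destruct (Rtotal_order x q) as [Hx | [Hx | Hx]].
  - assert (y < q) by nra.
    assert (r < q).
    { destruct (Rlt_or_le r q); auto.
      assert (0 < (r - x) * (r - y)) by (apply Rmult_lt_0_compat; lra). nra. }
    nra.
  - subst. nra.
  - assert (q < y) by nra.
    assert (q < r).
    { destruct (Rlt_or_le q r); auto.
      assert (0 < (x - r) * (y - r)) by (apply Rmult_lt_0_compat; lra). nra. }
    nra.
Qed.

Lemma ray_along g e σ t1 t2 : t1 <> σ ->
  padd g (pscale t2 e) = padd (padd g (pscale σ e))
    (pscale ((t2 - σ) / (t1 - σ)) (psub (padd g (pscale t1 e)) (padd g (pscale σ e)))).
Proof. intro H. assert (t1 - σ <> 0) by lra. coords. f_equal; field; auto. Qed.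

(** * Inversion and the visual angle metric *)

Lemma invert_power q r z :
  r = dot q q - 1 -> dot (psub z q) (psub z q) <> 0 ->
  dot (invert q r z) (invert q r z) - 1 = r * (dot z z - 1) / dot (psub z q) (psub z q).
Proof. intros Hr Hz. subst r. unfold invert. coords. field. exact Hz. Qed.

Lemma invert_involutive q r z :
  r <> 0 -> dot (psub z q) (psub z q) <> 0 -> invert q r (invert q r z) = z.
Proof.
  intros Hr Hz. unfold invert at 1 2.
  rewrite psub_padd_l, dot_pscale_self, pscale_pscale.
  replace (r / (r / dot (psub z q) (psub z q) * (r / dot (psub z q) (psub z q))
                * dot (psub z q) (psub z q)) * (r / dot (psub z q) (psub z q))) with 1
    by (field; auto).
  rewrite pscale_1. apply padd_psub.
Qed.

Lemma invert_along g e t0 κ t t' :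
  dot e e <> 0 -> t <> t0 -> (t - t0) * (t' - t0) = κ ->
  invert (padd g (pscale t0 e)) (κ * dot e e) (padd g (pscale t e)) = padd g (pscale t' e).
Proof.
  intros He Ht Hκ. assert (Ht' : t' = t0 + κ / (t - t0)) by (rewrite <- Hκ; field; lra).
  subst t'. unfold invert.
  replace (psub (padd g (pscale t e)) (padd g (pscale t0 e))) with (pscale (t - t0) e)
    by (coords; f_equal; ring).
  rewrite dot_pscale_self, pscale_pscale.
  replace (κ * dot e e / ((t - t0) * (t - t0) * dot e e) * (t - t0)) with (κ / (t - t0))
    by (field; split; lra || auto).
  coords. f_equal; ring.
Qed.

Lemma invert_scaled q r X μ :
  μ <> 0 -> dot X X <> 0 ->
  invert q r (padd q (pscale μ X)) = padd q (pscale (r / (μ * dot X X)) X).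
Proof.
  intros Hμ HX. unfold invert.
  rewrite psub_padd_l, dot_pscale_self, pscale_pscale.
  do 2 f_equal. field. auto.
Qed.

Lemma angle_comm x z y : angle x z y = angle y z x.
Proof. unfold angle. f_equal. coords. f_equal; ring. Qed.

Lemma cos_ratio_scale u v u' v' K :
  0 < K -> dot u' v' = K * dot u v ->
  dot u' u' * dot v' v' = (K * K) * (dot u u * dot v v) ->
  dot u' v' / (pnorm u' * pnorm v') = dot u v / (pnorm u * pnorm v).
Proof.
  intros HK H1 H2. unfold pnorm.
  rewrite <- !sqrt_mult by apply dot_self_nonneg.
  rewrite H2, sqrt_mult by (try apply Rmult_le_pos; try apply dot_self_nonneg; nra).
  rewrite sqrt_square by lra. rewrite H1.
  destruct (Req_dec (sqrt (dot u u * dot v v)) 0) as [E | E].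
  - assert (Z : dot u u * dot v v = 0).
    { pose proof (sqrt_sqrt (dot u u * dot v v)) as S.
      rewrite <- S by (apply Rmult_le_pos; apply dot_self_nonneg). rewrite E. ring. }
    pose proof (dot_cauchy_schwarz u v) as CS. rewrite Z in CS.
    assert (dot u v = 0) as ->  by nra. rewrite E. unfold Rdiv. ring.
  - field. split; lra.
Qed.

(* The triangles (q, x, z) and (q, inv z, inv x) are similar; as the third point lies
   on the ray from q through x, the angle at z is preserved. *)
Lemma invert_angle q r x z μ :
  0 < r -> 0 < μ ->
  dot (psub x q) (psub x q) <> 0 -> dot (psub z q) (psub z q) <> 0 ->
  angle (invert q r x) (invert q r z) (invert q r (padd q (pscale μ (psub x q))))
  = angle x z (padd q (pscale μ (psub x q))).
Proof.
  intros Hr Hμ Hx Hz. unfold angle. f_equal.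
  rewrite invert_scaled by (auto; lra).
  unfold invert.
  set (X := psub x q) in *. set (Z := psub z q) in *.
  assert (Hcancel : forall u v, psub (padd q u) (padd q v) = psub u v)
    by (intros; coords; f_equal; ring).
  rewrite !Hcancel.
  replace (psub x z) with (psub (pscale 1 X) (pscale 1 Z))
    by (unfold X, Z; coords; f_equal; ring).
  replace (psub (padd q (pscale μ X)) z) with (psub (pscale μ X) (pscale 1 Z))
    by (unfold X, Z; coords; f_equal; ring).
  pose proof (dot_self_nonneg X). pose proof (dot_self_nonneg Z).
  apply cos_ratio_scale with (K := r * r / (μ * dot X X * dot Z Z)).
  - apply Rdiv_lt_0_compat; [nra |].
    apply Rmult_lt_0_compat; [apply Rmult_lt_0_compat |]; lra.
  - rewrite !dot_sub_scaled. field. repeat split; auto; lra.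
  - rewrite !dot_sub_scaled. field. repeat split; auto; lra.
Qed.

Lemma on_unit_circle_iff z : on_unit_circle z <-> dot z z = 1.
Proof.
  unfold on_unit_circle, pnorm. split; intro H.
  - rewrite <- (sqrt_sqrt (dot z z)) by apply dot_self_nonneg. rewrite H. ring.
  - rewrite H. apply sqrt_1.
Qed.

Lemma vB2_transport x y x' y' (F : pt -> pt) :
  (forall z, on_unit_circle z -> on_unit_circle (F z)) ->
  (forall z, on_unit_circle z -> F (F z) = z) ->
  (forall z, on_unit_circle z -> angle x z y = angle x' (F z) y') ->
  vB2 x y = vB2 x' y'.
Proof.
  intros Hcirc Hinv Hangle. unfold vB2. f_equal. apply Lub_Rbar_eqset. intro t. split.
  - intros [z [Hz ->]]. exists (F z). split; auto.
  - intros [z [Hz ->]]. exists (F z). split; auto. rewrite Hangle, Hinv; auto.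
Qed.

Lemma vB2_comm x y : vB2 x y = vB2 y x.
Proof.
  apply (vB2_transport _ _ _ _ (fun z => z)); auto. intros. apply angle_comm.
Qed.

(* The circle of centre q and squared radius |q|^2 - 1 is orthogonal to the unit circle. *)
Lemma vB2_invert q x μ :
  1 < dot q q -> dot (psub x q) (psub x q) <> 0 -> 0 < μ ->
  vB2 (invert q (dot q q - 1) x) (invert q (dot q q - 1) (padd q (pscale μ (psub x q))))
  = vB2 x (padd q (pscale μ (psub x q))).
Proof.
  intros Hq Hx Hμ. symmetry.
  assert (Hcirc : forall z, on_unit_circle z -> 0 < dot (psub z q) (psub z q)).
  { intros z Hz%on_unit_circle_iff. apply dot_self_sub_pos. lra. }
  apply (vB2_transport _ _ _ _ (invert q (dot q q - 1))).
  - intros z Hz. apply on_unit_circle_iff.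
    pose proof (Hcirc z Hz) as Pz. apply on_unit_circle_iff in Hz.
    assert (E := invert_power q _ z eq_refl (Rgt_not_eq _ _ Pz)).
    rewrite Hz, Rminus_diag, Rmult_0_r, Rdiv_0_l in E. lra.
  - intros z Hz. apply invert_involutive; [lra | apply Rgt_not_eq, Hcirc, Hz].
  - intros z Hz. symmetry. apply invert_angle; try lra; auto.
    apply Rgt_not_eq, Hcirc, Hz.
Qed.

Section Configuration.

Variables a b c d h : pt.
Variable s : R.
Hypothesis Ha : dot a a = 1.
Hypothesis Hb : dot b b = 1.
Hypothesis Hc : dot c c = 1.
Hypothesis Hd : dot d d = 1.
Hypothesis Hs : 0 < s < 1.
Hypothesis Hh : h = padd b (pscale s (psub c b)).
Hypothesis Hnp : cross (psub b a) (psub d c) <> 0.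
(* a, b, c, d lie in this cyclic order: all four triangles have the same orientation. *)
Hypothesis Habc_abd : 0 < orient a b c * orient a b d.
Hypothesis Habc_acd : 0 < orient a b c * orient a c d.
Hypothesis Habc_bcd : 0 < orient a b c * orient b c d.

Let D := cross (psub b a) (psub d c).
Let t0 := cross (psub c a) (psub d c) / D.
Let g := LIS a b c d.
Let e := psub h g.
Let γ := dot g g - 1.
Let β := 2 * dot g e.

Lemma orient_nonzero :
  orient a b c <> 0 /\ orient a b d <> 0 /\ orient a c d <> 0 /\ orient b c d <> 0.
Proof. repeat split; intro E; rewrite E in *; lra. Qed.

Lemma g_on_ab : g = padd a (pscale t0 (psub b a)).
Proof. reflexivity. Qed.

Lemma t0_mul_D : t0 * D = orient a c d /\ (t0 - 1) * D = orient b c d.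
Proof.
  assert (E : t0 * D = orient a c d).
  { unfold t0. rewrite cross_eq_orient. field. exact Hnp. }
  split; [exact E |]. rewrite <- (orient_sub_cross a b c d). fold D. lra.
Qed.

Lemma g_outside_segment : 0 < t0 * (t0 - 1).
Proof.
  destruct t0_mul_D as [E0 E1].
  assert (P : 0 < (t0 * (t0 - 1)) * (D * D)).
  { replace ((t0 * (t0 - 1)) * (D * D)) with ((t0 * D) * ((t0 - 1) * D)) by ring.
    rewrite E0, E1. exact (pos_prod_same_sign _ _ _ Habc_acd Habc_bcd). }
  apply (Rmult_lt_reg_r (D * D)); [apply Rsqr_pos_lt, Hnp |]. lra.
Qed.

Lemma g_outside : 0 < γ.
Proof.
  unfold γ. rewrite g_on_ab, chord_power by assumption.
  apply Rmult_lt_0_compat; [exact g_outside_segment |].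
  apply (cross_nonzero_dot_pos _ (psub c a)). apply orient_nonzero.
Qed.

Lemma h_inside : dot h h - 1 < 0.
Proof.
  rewrite Hh, chord_power by assumption.
  assert (0 < dot (psub c b) (psub c b)).
  { apply (cross_nonzero_dot_pos _ (psub a b)).
    change (orient b c a <> 0). rewrite <- orient_cyclic. apply orient_nonzero. }
  assert (s * (s - 1) < 0) by nra. nra.
Qed.

Lemma orient_g :
  orient a b g = 0 /\ orient c d g = 0 /\
  orient a d g = - t0 * orient a b d /\ orient b c g = (1 - t0) * orient a b c.
Proof.
  destruct t0_mul_D as [E0 E1].
  rewrite g_on_ab, !orient_affine_comb, !orient_at_left, !orient_at_right.
  repeat split.
  - ring.
  - rewrite <- (orient_cyclic a c d), <- (orient_cyclic b c d), <- E0, <- E1. ring.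
  - rewrite (orient_swap_last a b d). ring.
  - rewrite <- (orient_cyclic a b c). ring.
Qed.

Lemma h_along : h = padd g (pscale 1 e).
Proof. unfold e. rewrite pscale_1, padd_psub. reflexivity. Qed.

Lemma power_h_along : dot h h - 1 = γ + β + dot e e.
Proof. rewrite h_along at 1 2. rewrite power_along. fold γ β. ring. Qed.

Lemma beta_negative : β + γ < 0 /\ β < 0.
Proof.
  pose proof h_inside. pose proof power_h_along. pose proof g_outside.
  pose proof (dot_self_nonneg e). split; lra.
Qed.

Lemma e_nonzero : 0 < dot e e.
Proof.
  destruct (Rle_lt_or_eq_dec _ _ (dot_self_nonneg e)) as [P | E]; [exact P |].
  apply eq_sym, dot_self_eq0 in E. destruct beta_negative as [_ Hβ].
  unfold β in Hβ. rewrite E in Hβ. unfold dot in Hβ; simpl in Hβ. lra.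
Qed.

Lemma cross_bc : cross (psub c b) e = - orient b c g.
Proof.
  assert (E : orient b c h = 0)
    by (rewrite Hh, orient_affine_comb, orient_at_left, orient_at_right; ring).
  rewrite h_along, orient_along in E. lra.
Qed.

Lemma pencil_ad_bc :
  γ * (orient a d g * cross (psub c b) e + orient b c g * cross (psub d a) e)
  = β * (orient a d g * orient b c g).
Proof.
  destruct orient_nonzero as (Habc & _ & Hacd0 & _).
  assert (Hcd : c <> d) by (intro E; subst d; apply Hacd0, orient_at_right).
  destruct (unit_circle_pencil a b c d Ha Hb Hc Hd Habc Hcd) as (m & n & l & Hm & Hpencil).
  destruct orient_g as (Hab & Hcdg & _).
  exact (pencil_line_coefficients _ _ _ _ _ _ _ _ g e m n l Hm Hpencil Hab Hcdg).
Qed.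

Lemma pencil_ac_bd :
  γ * (orient a c g * cross (psub d b) e + orient b d g * cross (psub c a) e)
  = β * (orient a c g * orient b d g).
Proof.
  destruct orient_nonzero as (_ & Habd0 & Hacd0 & _).
  assert (Hdc : d <> c) by (intro E; subst d; apply Hacd0, orient_at_right).
  destruct (unit_circle_pencil a b d c Ha Hb Hd Hc Habd0 Hdc) as (m & n & l & Hm & Hpencil).
  destruct orient_g as (Hab & Hcdg & _).
  assert (Hdcg : orient d c g = 0) by (rewrite orient_swap, Hcdg; ring).
  exact (pencil_line_coefficients _ _ _ _ _ _ _ _ g e m n l Hm Hpencil Hab Hdcg).
Qed.

Lemma orient_g_nonzero : orient a d g <> 0 /\ orient b c g <> 0.
Proof.
  destruct orient_g as (_ & _ & -> & ->). destruct orient_nonzero as (Habc & Habd0 & _).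
  pose proof g_outside_segment.
  split; apply Rmult_integral_contrapositive; split; auto; nra.
Qed.

Lemma cross_ad : γ * cross (psub d a) e = (β + γ) * orient a d g.
Proof.
  pose proof pencil_ad_bc as P. rewrite cross_bc in P.
  apply (Rmult_eq_reg_l (orient b c g)); [nra | apply orient_g_nonzero].
Qed.

Let tl := - orient a d g / cross (psub d a) e.
Let tj := - orient a c g / cross (psub c a) e.
Let tk := - orient b d g / cross (psub d b) e.
(* The involution of the line g + t e is the inversion centred at t = σ with power κ. *)
Let σ := - γ / β.
Let κ := γ / β * (γ / β).
Let q := padd g (pscale σ e).
Let j := LIS g h a c.
Let k := LIS g h b d.
Let l := LIS g h a d.

Lemma cross_ad_nonzero : cross (psub d a) e <> 0.
Proof.
  intro E. pose proof cross_ad as C. rewrite E, Rmult_0_r in C.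
  destruct beta_negative as [Hβγ _]. destruct orient_g_nonzero as [Had _].
  apply (Rmult_integral_contrapositive (β + γ) (orient a d g)); [split; lra || auto |].
  lra.
Qed.

Lemma h_l_center : (1 - σ) * (tl - σ) = κ.
Proof.
  apply involution_center; [apply Rlt_not_eq, beta_negative |].
  apply (involution_of_coefficients γ β (orient b c g) (cross (psub c b) e)
                                      (orient a d g) (cross (psub d a) e)).
  - pose proof pencil_ad_bc. nra.
  - rewrite cross_bc. apply Ropp_neq_0_compat, orient_g_nonzero.
  - exact cross_ad_nonzero.
  - rewrite cross_bc. ring.
  - unfold tl. field. exact cross_ad_nonzero.
Qed.

Lemma kappa_pos : 0 < κ.
Proof.
  unfold κ. destruct beta_negative as [_ Hβ].
  pose proof (Rdiv_pos_neg _ _ g_outside Hβ). nra.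
Qed.

Lemma sigma_neq_1 : 1 <> σ.
Proof. intro E. pose proof h_l_center. pose proof kappa_pos. rewrite <- E in *. lra. Qed.

Lemma q_power : dot q q - 1 = κ * dot e e.
Proof.
  unfold q. rewrite power_along. fold γ β. unfold σ, κ.
  field. apply Rlt_not_eq, beta_negative.
Qed.

Lemma h_q_distance : 0 < dot (psub h q) (psub h q).
Proof.
  apply dot_self_sub_pos. pose proof h_inside. pose proof q_power.
  pose proof kappa_pos. pose proof e_nonzero.
  assert (0 < κ * dot e e) by (apply Rmult_lt_0_compat; auto). lra.
Qed.

Lemma l_along : l = padd g (pscale tl e).
Proof. unfold l. rewrite LIS_along. reflexivity. Qed.

Lemma l_image : l = invert q (κ * dot e e) h.
Proof.
  rewrite l_along, h_along. symmetry.
  apply invert_along; [apply Rgt_not_eq, e_nonzero | apply sigma_neq_1 | apply h_l_center].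
Qed.

Lemma l_inside : dot l l - 1 < 0.
Proof.
  rewrite l_image, (invert_power q _ h (eq_sym q_power) (Rgt_not_eq _ _ h_q_distance)).
  apply Rdiv_neg_pos; [| exact h_q_distance].
  apply Rmult_pos_neg; [apply Rmult_lt_0_compat; [apply kappa_pos | apply e_nonzero] | apply h_inside].
Qed.

Lemma l_on_chord : exists τ, 0 < τ < 1 /\ l = padd a (pscale τ (psub d a)).
Proof.
  assert (Hl : orient a d l = 0)
    by (rewrite l_along, orient_along; unfold tl; field; exact cross_ad_nonzero).
  assert (Had : a <> d).
  { destruct orient_nonzero as (_ & Habd0 & _). intro E. apply Habd0.
    rewrite <- E. apply orient_at_left. }
  destruct (on_line_param a d l Hl Had) as [τ Hτ]. exists τ. split; [| exact Hτ].
  pose proof l_inside as P. rewrite Hτ, chord_power in P by assumption.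
  pose proof (dot_self_pos_of_neq a d Had).
  assert (τ * (τ - 1) < 0).
  { destruct (Rlt_or_le (τ * (τ - 1)) 0); auto. nra. }
  split; nra.
Qed.

Lemma j_between : cross (psub c a) e <> 0 /\ (1 - tj) * (tl - tj) < 0.
Proof.
  apply root_between. destruct l_on_chord as (τ & Hτ & Hl).
  rewrite <- (orient_along a c g e 1), <- h_along, <- (orient_along a c g e tl), <- l_along.
  rewrite Hl, Hh, !orient_affine_comb, !orient_at_left, !orient_at_right.
  rewrite (orient_swap_last a b c).
  destruct Hs. destruct Hτ.
  assert (0 < (1 - s) * τ) by (apply Rmult_lt_0_compat; lra). nra.
Qed.

Lemma k_between : cross (psub d b) e <> 0 /\ (1 - tk) * (tl - tk) < 0.
Proof.
  apply root_between. destruct l_on_chord as (τ & Hτ & Hl).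
  rewrite <- (orient_along b d g e 1), <- h_along, <- (orient_along b d g e tl), <- l_along.
  rewrite Hl, Hh, !orient_affine_comb, !orient_at_left, !orient_at_right.
  rewrite (orient_swap_last b c d), <- (orient_cyclic a b d).
  pose proof (pos_prod_same_sign _ _ _ Habc_abd Habc_bcd).
  destruct Hs. destruct Hτ.
  assert (0 < s * (1 - τ)) by (apply Rmult_lt_0_compat; lra). nra.
Qed.

Lemma j_k_center : (tj - σ) * (tk - σ) = κ.
Proof.
  destruct j_between as [Hac _]. destruct k_between as [Hbd _].
  apply involution_center; [apply Rlt_not_eq, beta_negative |].
  apply (involution_of_coefficients γ β (orient a c g) (cross (psub c a) e)
                                      (orient b d g) (cross (psub d b) e));
    auto; [apply pencil_ac_bd | unfold tj | unfold tk]; field; auto.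
Qed.

Lemma vB2_partner t t' :
  0 < (1 - σ) * (t - σ) -> (t - σ) * (t' - σ) = κ ->
  vB2 h (padd g (pscale t e)) = vB2 (padd g (pscale t' e)) l.
Proof.
  intros Hside Hpair.
  assert (H1σ : 1 - σ <> 0) by (pose proof sigma_neq_1; lra).
  assert (Htσ : t <> σ) by (intro E; rewrite E, Rminus_diag, Rmult_0_r in Hside; lra).
  assert (Hμ : 0 < (t - σ) / (1 - σ)).
  { replace ((t - σ) / (1 - σ)) with ((1 - σ) * (t - σ) / ((1 - σ) * (1 - σ)))
      by (field; exact H1σ).
    apply Rdiv_lt_0_compat; [exact Hside | apply Rsqr_pos_lt, H1σ]. }
  assert (Hq : 1 < dot q q)
    by (pose proof q_power; pose proof kappa_pos; pose proof e_nonzero; nra).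
  pose proof (ray_along g e σ 1 t sigma_neq_1) as Hray. rewrite <- h_along in Hray.
  fold q in Hray. rewrite Hray.
  rewrite <- (vB2_invert q h _ Hq (Rgt_not_eq _ _ h_q_distance) Hμ).
  rewrite <- Hray, q_power, <- l_image. rewrite vB2_comm. f_equal.
  apply invert_along; [apply Rgt_not_eq, e_nonzero | exact Htσ | exact Hpair].
Qed.

Lemma visual_angle_equalities : vB2 h j = vB2 k l /\ vB2 h k = vB2 j l.
Proof.
  assert (Hj : j = padd g (pscale tj e)) by (unfold j; rewrite LIS_along; reflexivity).
  assert (Hk : k = padd g (pscale tk e)) by (unfold k; rewrite LIS_along; reflexivity).
  pose proof h_l_center as Hhl. pose proof kappa_pos.
  assert (Hl : 0 < (1 - σ) * (tl - σ)) by lra.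
  destruct j_between as [_ Bj]. destruct k_between as [_ Bk].
  pose proof j_k_center as Hjk.
  rewrite Hj, Hk. split; apply vB2_partner.
  - exact (same_side_of_between _ _ _ _ Bj Hl).
  - exact Hjk.
  - exact (same_side_of_between _ _ _ _ Bk Hl).
  - rewrite Rmult_comm. exact Hjk.
Qed.

End Configuration.

Theorem mainTheorem4 (a b c d h : pt) :
  (exists t1 t2 t3 t4 : R,
      t1 < t2 /\ t2 < t3 /\ t3 < t4 /\ t4 < t1 + 2 * PI /\
      ((a = cis t1 /\ b = cis t2 /\ c = cis t3 /\ d = cis t4) \/
       (a = cis t4 /\ b = cis t3 /\ c = cis t2 /\ d = cis t1))) ->
  ~ parallel a b c d ->
  (exists s : R, 0 < s /\ s < 1 /\ h = padd b (pscale s (psub c b))) ->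
  let g := LIS a b c d in
  let j := LIS g h a c in
  let k := LIS g h b d in
  let l := LIS g h a d in
  vB2 h j = vB2 k l /\ vB2 h k = vB2 j l.
Proof.
  intros (t1 & t2 & t3 & t4 & T12 & T23 & T34 & T41 & Hcase) Hnp (s & Hs0 & Hs1 & Hh).
  pose proof (orient_cis t1 t2 t3 ltac:(lra) ltac:(lra) ltac:(lra)) as O123.
  pose proof (orient_cis t1 t2 t4 ltac:(lra) ltac:(lra) ltac:(lra)) as O124.
  pose proof (orient_cis t1 t3 t4 ltac:(lra) ltac:(lra) ltac:(lra)) as O134.
  pose proof (orient_cis t2 t3 t4 ltac:(lra) ltac:(lra) ltac:(lra)) as O234.
  assert (Hrev : forall p q r, 0 < orient p q r -> orient r q p < 0)
    by (intros p q r H; rewrite orient_reverse; lra).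
  destruct Hcase as [(-> & -> & -> & ->) | (-> & -> & -> & ->)];
    apply (visual_angle_equalities _ _ _ _ _ s);
    solve [ apply dot_cis | split; assumption | assumption
          | apply Rmult_lt_0_compat; assumption
          | apply Rmult_neg_neg; apply Hrev; assumption ].
Qed.
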